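(* Consider Algorithm SS-SQP (described in the context) under the standing assumptions (A1), (A2). Let $\kappa_y>0$ be a constant with $\|y_k\|\le\kappa_y$ for all $k$, and let $\kappa_l>0$ be a constant with $\Delta l(x_k,\bar\tau_k,\bar g_k,\bar d_k)\ge\kappa_l\bar\tau_k(\|\bar d_k\|^2+\|c_k\|)$ for all $k$ (such constants exist). Then for all $k\in\mathbb{N}$: (1) if $\|\bar g_k-\nabla f_k\|\le\kappa_{\mathrm{FO}}\alpha_k\sqrt{\Delta l(x_k,\bar\tau_k,\bar g_k,\bar d_k)}$, then $$\bar\tau_k|\bar g_k^T\bar d_k|\le\left(\frac{\max\{\kappa_H,\kappa_y\}}{\kappa_l}+\frac{\sqrt{\bar\tau_k}(1+\kappa_H\zeta^{-1})\kappa_{\mathrm{FO}}\alpha_k}{\sqrt{\kappa_l}}\right)\Delta l(x_k,\bar\tau_k,\bar g_k,\bar d_k);$$ (2) if $\|\bar g_k-\nabla f_k\|\le\epsilon_g$, then $$\bar\tau_k|\bar g_k^T\bar d_k|\le\frac{\max\{\kappa_H,\kappa_y\}+1}{\kappa_l}\Delta l(x_k,\bar\tau_k,\bar g_k,\bar d_k)+\frac{\bar\tau_k(1+\kappa_H\zeta^{-1})^2}{4}\epsilon_g^2.$$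
   Context: Problem: $\min_{x\in\mathbb{R}^n}f(x)$ s.t. $c(x)=0$ with $f,c$ continuously differentiable, $c:\mathbb{R}^n\to\mathbb{R}^m$, $m\le n$; $\nabla f_k=\nabla f(x_k)$, $c_k=c(x_k)$, $J_k=\nabla c(x_k)^T$; $\|\cdot\|$ Euclidean norm. $\Delta l(x,\tau,g,d)=-\tau g^Td+\|c(x)\|_1$. $\kappa_{\mathrm{FO}}\ge0$ and $\epsilon_g\ge0$ are constants (parameters of the first-order oracle). Standing assumption (A1): there is an open convex set $\mathcal{X}$ containing all iterates and trial iterates; $f$ bounded below, $\nabla f$ $L$-Lipschitz and bounded, $c$ bounded, each $\nabla c_i$ Lipschitz and bounded on $\mathcal{X}$; singular values of $\nabla c(x)^T$ bounded away from zero on $\mathcal{X}$. (A2): $H_k$ symmetric, chosen independently of $\bar g_k$, $\|H_k\|\le\kappa_H$, $u^TH_ku\ge\zeta\|u\|^2$ for $u\in\mathrm{Null}(J_k)$, $\kappa_H,\zeta>0$. Algorithm SS-SQP: inputs $x_0$, $\bar\tau_{-1}>0$, $\alpha_{\max}\in(0,1]$, $\alpha_0\in(0,\alpha_{\max}]$, $\epsilon_f\ge0$, $\gamma,\theta,\sigma,\epsilon_\tau\in(0,1)$. At iteration $k$: random gradient estimate $\bar g_k$; solve $\begin{bmatrix}H_k & J_k^T\\ J_k&0\end{bmatrix}\begin{bmatrix}\bar d_k\\ \bar y_k\end{bmatrix}=-\begin{bmatrix}\bar g_k\\ c_k\end{bmatrix}$; $\bar\tau_k^{\rm trial}=\infty$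 if $\bar g_k^T\bar d_k+\max\{\bar d_k^TH_k\bar d_k,0\}\le0$, else $(1-\sigma)\|c_k\|_1/(\bar g_k^T\bar d_k+\max\{\bar d_k^TH_k\bar d_k,0\})$; $\bar\tau_k=\bar\tau_{k-1}$ if $\bar\tau_{k-1}\le\bar\tau_k^{\rm trial}$, else $\min\{(1-\epsilon_\tau)\bar\tau_{k-1},\bar\tau_k^{\rm trial}\}$; $x_k^+=x_k+\alpha_k\bar d_k$; with objective estimates $\bar f$ and $\bar\phi(x,\tau;\xi)=\tau\bar f(x;\xi)+\|c(x)\|_1$, set $x_{k+1}=x_k^+$, $\alpha_{k+1}=\min\{\alpha_{\max},\alpha_k/\gamma\}$ if $\bar\phi(x_k^+,\bar\tau_k;\xi_k^+)\le\bar\phi(x_k,\bar\tau_k;\xi_k^0)-\alpha_k\theta\Delta l(x_k,\bar\tau_k,\bar g_k,\bar d_k)+2\bar\tau_k\epsilon_f$, else $x_{k+1}=x_k$, $\alpha_{k+1}=\gamma\alpha_k$. The deterministic pair $(d_k,y_k)$ solves the same linear system with $\bar g_k$ replaced by $\nabla f_k$. *)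

From HB Require Import structures.
From mathcomp Require Import all_boot all_order all_algebra.
From mathcomp Require Import reals.
Set Implicit Arguments. Unset Strict Implicit. Unset Printing Implicit Defensive.
Import Order.TTheory GRing.Theory Num.Theory.
Local Open Scope ring_scope.

Section Defs.
Variable R : realType.

Definition dotv n (u v : 'cV[R]_n) : R := (u^T *m v) 0 0.
Definition enorm n (u : 'cV[R]_n) : R := Num.sqrt (dotv u u).
Definition norm1 n (u : 'cV[R]_n) : R := \sum_i `|u i 0|.

Definition Dl n m (c : 'cV[R]_n -> 'cV[R]_m) (x : 'cV[R]_n) (tau : R)
  (g d : 'cV[R]_n) : R := - tau * dotv g d + norm1 (c x).

Definition is_grad n (f : 'cV[R]_n -> R) (g x : 'cV[R]_n) : Prop :=
  forall eps, 0 < eps -> exists2 del, 0 < del &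
    forall z, enorm (z - x) < del ->
      `|f z - f x - dotv g (z - x)| <= eps * enorm (z - x).

Definition is_jac n m (c : 'cV[R]_n -> 'cV[R]_m) (J : 'M[R]_(m, n))
  (x : 'cV[R]_n) : Prop :=
  forall i : 'I_m, is_grad (fun z => c z i 0) (row i J)^T x.

Definition cont_at n p (F : 'cV[R]_n -> 'cV[R]_p) (x : 'cV[R]_n) : Prop :=
  forall eps, 0 < eps -> exists2 del, 0 < del &
    forall z, enorm (z - x) < del -> enorm (F z - F x) < eps.

(* f and c continuously differentiable on R^n, with gradient gradf and
   Jacobian Jc = (nabla c)^T *)
Definition C1_problem n m (f : 'cV[R]_n -> R) (c : 'cV[R]_n -> 'cV[R]_m)
  (gradf : 'cV[R]_n -> 'cV[R]_n) (Jc : 'cV[R]_n -> 'M[R]_(m, n)) : Prop :=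
  (forall x, is_grad f (gradf x) x) /\ (forall x, is_jac c (Jc x) x) /\
  (forall x, cont_at gradf x) /\
  (forall (i : 'I_m) x, cont_at (fun z => (row i (Jc z))^T) x).

Definition open_set n (X : 'cV[R]_n -> Prop) : Prop :=
  forall x, X x -> exists2 r, 0 < r & forall z, enorm (z - x) < r -> X z.

Definition convex_set n (X : 'cV[R]_n -> Prop) : Prop :=
  forall x z (t : R), X x -> X z -> 0 <= t <= 1 -> X ((1 - t) *: x + t *: z).

Definition assumption_A1 n m (f : 'cV[R]_n -> R) (c : 'cV[R]_n -> 'cV[R]_m)
  (gradf : 'cV[R]_n -> 'cV[R]_n) (Jc : 'cV[R]_n -> 'M[R]_(m, n))
  (x xp : nat -> 'cV[R]_n) : Prop :=
  exists X : 'cV[R]_n -> Prop,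
  [/\ open_set X, convex_set X, (forall k, X (x k) /\ X (xp k)) &
      (exists flow, forall z, X z -> flow <= f z)] /\
  [/\ (exists L, 0 <= L /\ forall z w, X z -> X w ->
           enorm (gradf z - gradf w) <= L * enorm (z - w)),
      (exists B, forall z, X z -> enorm (gradf z) <= B) &
      (exists B, forall z, X z -> enorm (c z) <= B)] /\
  [/\ (forall i : 'I_m, exists L, 0 <= L /\ forall z w, X z -> X w ->
           enorm ((row i (Jc z))^T - (row i (Jc w))^T) <= L * enorm (z - w)),
      (forall i : 'I_m, exists B, forall z, X z -> enorm (row i (Jc z))^T <= B)
    & (* singular values of nabla c(x)^T = (Jc x)^T bounded away from zero *)
      (exists s, 0 < s /\ forall z, X z -> forall w : 'cV[R]_m,
           s * enorm w <= enorm ((Jc z)^T *m w))].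

(* Assumption (A2) (pathwise part) *)
Definition assumption_A2 n m (Jc : 'cV[R]_n -> 'M[R]_(m, n))
  (x : nat -> 'cV[R]_n) (H : nat -> 'M[R]_n) (kappaH zeta : R) : Prop :=
  [/\ 0 < kappaH, 0 < zeta &
   forall k, [/\ (H k)^T = H k,
     (forall u, enorm (H k *m u) <= kappaH * enorm u) &
     (forall u, Jc (x k) *m u = 0 -> zeta * enorm u ^+ 2 <= dotv u (H k *m u))]].

Definition kkt n m (H : 'M[R]_n) (J : 'M[R]_(m, n)) (g : 'cV[R]_n)
  (cx : 'cV[R]_m) (d : 'cV[R]_n) (y : 'cV[R]_m) : Prop :=
  H *m d + J^T *m y = - g /\ J *m d = - cx.

(* trial merit parameter; None encodes +infinity *)
Definition tau_trial n m (sigma : R) (H : 'M[R]_n) (g d : 'cV[R]_n)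
  (cx : 'cV[R]_m) : option R :=
  let den := dotv g d + Num.max (dotv d (H *m d)) 0 in
  if den <= 0 then None else Some ((1 - sigma) * norm1 cx / den).

Definition tau_update (eps_tau prev : R) (trial : option R) : R :=
  match trial with
  | None => prev
  | Some t => if prev <= t then prev else Num.min ((1 - eps_tau) * prev) t
  end.

(* One realization of Algorithm SS-SQP: gbar k are the realized stochastic
   gradient estimates, fb0 k = fbar(x_k; xi_k^0) and fbp k = fbar(x_k^+; xi_k^+)
   the realized objective estimates. *)
Definition SS_SQP n m (c : 'cV[R]_n -> 'cV[R]_m)
  (Jc : 'cV[R]_n -> 'M[R]_(m, n))
  (x0 : 'cV[R]_n) (tau_m1 alpha_max alpha0 eps_f gamma theta sigma eps_tau : R)
  (H : nat -> 'M[R]_n) (gbar : nat -> 'cV[R]_n) (fb0 fbp : nat -> R)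
  (x : nat -> 'cV[R]_n) (alpha : nat -> R) (dbar : nat -> 'cV[R]_n)
  (ybar : nat -> 'cV[R]_m) (taubar : nat -> R) (xp : nat -> 'cV[R]_n) : Prop :=
  [/\ x 0%N = x0, alpha 0%N = alpha0 &
      forall k, kkt (H k) (Jc (x k)) (gbar k) (c (x k)) (dbar k) (ybar k)] /\
  (forall k, taubar k = tau_update eps_tau
       (if k is k'.+1 then taubar k' else tau_m1)
       (tau_trial sigma (H k) (gbar k) (dbar k) (c (x k)))) /\
  (forall k, xp k = x k + alpha k *: dbar k) /\
  (forall k,
     if taubar k * fbp k + norm1 (c (xp k)) <=
        taubar k * fb0 k + norm1 (c (x k))
        - alpha k * theta * Dl c (x k) (taubar k) (gbar k) (dbar k)
        + 2 * taubar k * eps_f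
     then x k.+1 = xp k /\ alpha k.+1 = Num.min alpha_max (alpha k / gamma)
     else x k.+1 = x k /\ alpha k.+1 = gamma * alpha k).

End Defs.

(* Subtracting the two KKT systems shows that u = dbar - d solves the KKT system
   with data (gbar - grad f, 0); hence J u = 0, and the curvature of H on Null(J)
   gives zeta |u| <= |gbar - grad f|.  Eliminating gbar and ybar - y through the
   two systems yields
     gbar^T dbar = c^T y - dbar^T H dbar + dbar^T H u + dbar^T (gbar - grad f),
   so |gbar^T dbar| <= max(kH, ky) (|dbar|^2 + |c|) + (1 + kH/zeta) |gbar - grad f| |dbar|.
   After multiplying by taubar >= 0 the first term is at most max(kH, ky)/kl * Dl,
   and taubar |dbar|^2 <= Dl/kl controls the second: through
   taubar |dbar| <= sqrt(taubar Dl / kl) under the relative error bound, and through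
   AM-GM under the absolute one. *)

From HB Require Import structures.
From mathcomp Require Import all_boot all_order all_algebra.
From mathcomp Require Import reals.
From mathcomp Require Import ring lra.

Set Implicit Arguments.
Unset Strict Implicit.
Unset Printing Implicit Defensive.

Import Order.TTheory GRing.Theory Num.Theory.
Local Open Scope ring_scope.

Section InnerProduct.
Context {R : realType} {n : nat}.
Implicit Types u v w : 'cV[R]_n.

Lemma dotvE u v : dotv u v = \sum_i u i 0 * v i 0.
Proof. by rewrite /dotv mxE; apply: eq_bigr => i _; rewrite mxE. Qed.

Lemma dotvC u v : dotv u v = dotv v u.
Proof. by rewrite !dotvE; apply: eq_bigr => i _; rewrite mulrC. Qed.

Lemma dotvDr u v w : dotv u (v + w) = dotv u v + dotv u w.
Proof. by rewrite /dotv mulmxDr mxE. Qed.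

Lemma dotvNr u v : dotv u (- v) = - dotv u v.
Proof. by rewrite /dotv mulmxN mxE. Qed.

Lemma dotvNl u v : dotv (- u) v = - dotv u v.
Proof. by rewrite dotvC dotvNr dotvC. Qed.

Lemma dotv0l v : dotv 0 v = 0.
Proof. by rewrite /dotv trmx0 mul0mx mxE. Qed.

Lemma dotv_ge0 u : 0 <= dotv u u.
Proof. by rewrite dotvE sumr_ge0 // => i _; rewrite -expr2 sqr_ge0. Qed.

Lemma enorm_ge0 u : 0 <= enorm u.
Proof. exact: sqrtr_ge0. Qed.

Lemma dotv_CauchySchwarz_sqr u v : dotv u v ^+ 2 <= dotv u u * dotv v v.
Proof.
have lagrange : \sum_i \sum_j (u i 0 * v j 0 - u j 0 * v i 0) ^+ 2 =
    (dotv u u * dotv v v - dotv u v ^+ 2) *+ 2.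
  have expand (a b c d : R) :
      (a * d - c * b) ^+ 2 = a * a * (d * d) + c * c * (b * b) - a * b * (c * d) *+ 2.
    by rewrite mulr2n; ring.
  under eq_bigr => i _ do
    (under eq_bigr => j _ do rewrite expand; rewrite sumrB big_split sumrMnl).
  rewrite sumrB big_split sumrMnl /= [X in _ + X - _]exchange_big /=.
  by rewrite !dotvE expr2 !big_distrlr /=; ring.
rewrite -subr_ge0 -(pmulrn_lge0 _ (ltn0Sn 1)) -lagrange.
by rewrite !sumr_ge0 // => i _; rewrite sumr_ge0 // => j _; rewrite sqr_ge0.
Qed.

Lemma dotv_CauchySchwarz u v : `|dotv u v| <= enorm u * enorm v.
Proof.
rewrite -sqrtrM ?dotv_ge0 // -sqrtr_sqr ler_sqrt ?dotv_CauchySchwarz_sqr //.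
by rewrite mulr_ge0 ?dotv_ge0.
Qed.

End InnerProduct.

Lemma dotv_mulmx {R : realType} {p q} (A : 'M[R]_(p, q)) (u : 'cV[R]_p) (v : 'cV[R]_q) :
  dotv u (A *m v) = dotv (A^T *m u) v.
Proof. by rewrite /dotv trmx_mul trmxK mulmxA. Qed.

Section KKT.
Context {R : realType} {n m : nat} {H : 'M[R]_n} {J : 'M[R]_(m, n)} {kH z : R}.
Hypothesis kH_ge0 : 0 <= kH.
Hypothesis z_gt0 : 0 < z.
Hypothesis H_bounded : forall u, enorm (H *m u) <= kH * enorm u.
Hypothesis H_curv_null : forall u, J *m u = 0 -> z * enorm u ^+ 2 <= dotv u (H *m u).

Lemma kktB g g' cx d d' y y' :
  kkt H J g cx d y -> kkt H J g' cx d' y' -> kkt H J (g - g') 0 (d - d') (y - y').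
Proof.
move=> [Hd Jd] [Hd' Jd']; split; rewrite !mulmxBr.
  by rewrite addrACA -opprD Hd Hd' opprK opprB addrC.
by rewrite Jd Jd' subrr oppr0.
Qed.

Lemma kkt_dotv g cx d y : kkt H J g cx d y -> dotv g d = dotv cx y - dotv d (H *m d).
Proof.
move=> [Hd Jd]; have := congr1 (dotv d) Hd.
rewrite dotvDr dotvNr (dotv_mulmx J^T) trmxK Jd dotvNl (dotvC d g).
lra.
Qed.

Lemma kkt_homog_enorm_le e u w : kkt H J e 0 u w -> z * enorm u <= enorm e.
Proof.
move=> K; have Ju : J *m u = 0 by rewrite K.2 oppr0.
have uHu : dotv u (H *m u) = - dotv e u by rewrite (kkt_dotv K) dotv0l sub0r opprK.
have zN2 : z * enorm u ^+ 2 <= enorm e * enorm u.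
  have := H_curv_null Ju; have := dotv_CauchySchwarz e u.
  rewrite uHu ler_norml => /andP[CS _]; lra.
have [u0|u_neq0] := eqVneq (enorm u) 0; first by rewrite u0 mulr0 enorm_ge0.
have u_gt0 : 0 < enorm u by rewrite lt_def u_neq0 enorm_ge0.
by rewrite -(ler_pM2r u_gt0) -mulrA -expr2.
Qed.

Lemma kkt_dotv_bound g g' cx d d' y y' ky :
    kkt H J g cx d y -> kkt H J g' cx d' y' -> enorm y' <= ky ->
  `|dotv g d| <=
    kH * enorm d ^+ 2 + ky * enorm cx + (1 + kH / z) * enorm (g - g') * enorm d.
Proof.
move=> K K' y'_le; have K0 := kktB K K'.
set e := g - g'; set u := d - d'.
have u_le : enorm u <= enorm e / z.
  by rewrite ler_pdivlMr // mulrC (kkt_homog_enorm_le K0).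
have decomp : dotv g d = dotv cx y' - dotv d (H *m d) + dotv d (H *m u) + dotv d e.
  have := congr1 (dotv d) K0.1.
  rewrite dotvDr dotvNr (dotv_mulmx J^T) trmxK K.2 dotvNl.
  have : dotv cx y = dotv cx y' + dotv cx (y - y') by rewrite -dotvDr addrC subrK.
  have := kkt_dotv K; lra.
have N_ge0 := enorm_ge0 d; have E_ge0 := enorm_ge0 e.
have b1 : `|dotv cx y'| <= ky * enorm cx.
  by rewrite (le_trans (dotv_CauchySchwarz _ _)) // mulrC ler_wpM2r ?enorm_ge0.
have b2 : `|dotv d (H *m d)| <= kH * enorm d ^+ 2.
  by rewrite (le_trans (dotv_CauchySchwarz _ _)) // mulrC expr2 mulrA ler_wpM2r.
have b3 : `|dotv d (H *m u)| <= kH / z * enorm e * enorm d.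
  rewrite (le_trans (dotv_CauchySchwarz _ _)) // mulrC ler_wpM2r //.
  rewrite (le_trans (H_bounded u)) // -mulrA ler_wpM2l //.
  by rewrite mulrC.
have b4 : `|dotv d e| <= enorm e * enorm d.
  by rewrite dotvC dotv_CauchySchwarz.
move: b1 b2 b3 b4; rewrite decomp !ler_norml.
move=> /andP[? ?] /andP[? ?] /andP[? ?] /andP[? ?]; apply/andP; split; lra.
Qed.

End KKT.

Lemma tau_trial_ge0 {R : realType} {n m} sigma (H : 'M[R]_n) g d (cx : 'cV[R]_m) t :
  sigma <= 1 -> tau_trial sigma H g d cx = Some t -> 0 <= t.
Proof.
rewrite /tau_trial; case: ifP => // /negbT; rewrite -ltNge => den_gt0 sigma_le1 [<-].
rewrite divr_ge0 ?(ltW den_gt0) // mulr_ge0 ?subr_ge0 //.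
by apply: sumr_ge0 => i _; apply: normr_ge0.
Qed.

Lemma tau_update_ge0 {R : realType} (eps prev : R) trial :
    eps <= 1 -> 0 <= prev -> (forall t, trial = Some t -> 0 <= t) ->
  0 <= tau_update eps prev trial.
Proof.
move=> eps_le1 prev_ge0; case: trial => [t /(_ t erefl) t_ge0|] //=.
by case: ifP => // _; rewrite le_min t_ge0 andbT mulr_ge0 // subr_ge0.
Qed.

Lemma tau_seq_ge0 {R : realType} {n m} sigma eps tau0 (H : nat -> 'M[R]_n)
    (g d : nat -> 'cV[R]_n) (cx : nat -> 'cV[R]_m) (tau : nat -> R) :
    sigma <= 1 -> eps <= 1 -> 0 <= tau0 ->
    (forall k, tau k = tau_update eps (if k is k'.+1 then tau k' else tau0)
                         (tau_trial sigma (H k) (g k) (d k) (cx k))) ->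
  forall k, 0 <= tau k.
Proof.
move=> sigma_le1 eps_le1 tau0_ge0 tau_rec.
elim=> [|k IHk]; rewrite tau_rec tau_update_ge0 // => t; exact: tau_trial_ge0.
Qed.

Lemma mulr_le_sqrt_div {R : rcfType} (T N D kl : R) :
    0 <= T -> 0 <= N -> 0 < kl -> kl * (T * N ^+ 2) <= D ->
  T * N <= Num.sqrt T * Num.sqrt D / Num.sqrt kl.
Proof.
move=> T_ge0 N_ge0 kl_gt0 le_D.
have D_ge0 : 0 <= D := le_trans (mulr_ge0 (ltW kl_gt0) (mulr_ge0 T_ge0 (sqr_ge0 N))) le_D.
rewrite -(sqrtrM _ T_ge0) -(sqrtrV (ltW kl_gt0)) -sqrtrM ?mulr_ge0 //.
rewrite -(ger0_norm (mulr_ge0 T_ge0 N_ge0)) -sqrtr_sqr ler_sqrt; last first.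
  by rewrite !mulr_ge0 ?invr_ge0 ?(ltW kl_gt0).
rewrite ler_pdivlMr // (_ : _ * kl = T * (kl * (T * N ^+ 2))); last by ring.
exact: ler_wpM2l.
Qed.

Section MeritScaling.
(* T = taubar_k, N = |dbar_k|, C = |c_k|, E = |gbar_k - grad f_k|,
   G = gbar_k^T dbar_k, D = Dl(x_k, taubar_k, gbar_k, dbar_k), a = 1 + kH/zeta. *)
Variables (R : rcfType) (T kl M a N C E G D : R).
Hypotheses (T_ge0 : 0 <= T) (kl_gt0 : 0 < kl) (M_ge0 : 0 <= M) (a_ge0 : 0 <= a).
Hypotheses (N_ge0 : 0 <= N) (C_ge0 : 0 <= C) (E_ge0 : 0 <= E).
Hypothesis Dl_lb : kl * T * (N ^+ 2 + C) <= D.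
Hypothesis G_le : `|G| <= M * (N ^+ 2 + C) + a * E * N.

Lemma tau_dotv_le_Dl : T * `|G| <= M / kl * D + a * E * (T * N).
Proof.
apply: le_trans (ler_wpM2l T_ge0 G_le) _.
have -> : T * (M * (N ^+ 2 + C) + a * E * N) =
          M / kl * (kl * T * (N ^+ 2 + C)) + a * E * (T * N).
  by field; rewrite gt_eqF.
by rewrite lerD2r ler_wpM2l ?divr_ge0 ?(ltW kl_gt0).
Qed.

Lemma tau_sqr_le_Dl : kl * (T * N ^+ 2) <= D.
Proof.
rewrite (le_trans _ Dl_lb) // -mulrA ler_wpM2l ?(ltW kl_gt0) // ler_wpM2l //.
by rewrite lerDl.
Qed.

Lemma tau_dotv_le_Dl_sqrt_err K :
  E <= K * Num.sqrt D -> T * `|G| <= (M / kl + Num.sqrt T * a * K / Num.sqrt kl) * D.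
Proof.
move=> E_le; apply: (le_trans tau_dotv_le_Dl); rewrite mulrDl lerD2l.
have D_ge0 : 0 <= D by rewrite (le_trans _ tau_sqr_le_Dl) // !mulr_ge0 ?sqr_ge0 ?(ltW kl_gt0).
have -> : Num.sqrt T * a * K / Num.sqrt kl * D =
          a * (K * Num.sqrt D) * (Num.sqrt T * Num.sqrt D / Num.sqrt kl).
  by rewrite -[in LHS](sqr_sqrtr D_ge0); ring.
apply: ler_pM; rewrite ?mulr_ge0 ?ler_wpM2l //.
exact: mulr_le_sqrt_div T_ge0 N_ge0 kl_gt0 tau_sqr_le_Dl.
Qed.

Lemma tau_dotv_le_Dl_abs_err eps :
  E <= eps -> T * `|G| <= (M + 1) / kl * D + T * a ^+ 2 / 4 * eps ^+ 2.
Proof.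
move=> E_le; apply: (le_trans tau_dotv_le_Dl).
have TN2_le : T * N ^+ 2 <= D / kl by rewrite ler_pdivlMr // mulrC tau_sqr_le_Dl.
have AM_GM : a * eps * (T * N) <= T * N ^+ 2 + T * a ^+ 2 / 4 * eps ^+ 2.
  rewrite -subr_ge0 (_ : _ - _ = T * (N - a * eps / 2) ^+ 2); last by field.
  by rewrite mulr_ge0 ?sqr_ge0.
have : a * E * (T * N) <= a * eps * (T * N) by rewrite ler_wpM2r ?mulr_ge0 ?ler_wpM2l.
have -> : (M + 1) / kl * D = M / kl * D + D / kl by ring.
lra.
Qed.

End MeritScaling.

Theorem lemma3p15 (R : realType) (n m : nat)
  (f : 'cV[R]_n -> R) (c : 'cV[R]_n -> 'cV[R]_m)
  (gradf : 'cV[R]_n -> 'cV[R]_n) (Jc : 'cV[R]_n -> 'M[R]_(m, n))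
  (x0 : 'cV[R]_n)
  (tau_m1 alpha_max alpha0 eps_f gamma theta sigma eps_tau : R)
  (kappaFO eps_g kappaH zeta kappa_y kappa_l : R)
  (H : nat -> 'M[R]_n) (gbar : nat -> 'cV[R]_n) (fb0 fbp : nat -> R)
  (x : nat -> 'cV[R]_n) (alpha : nat -> R) (dbar : nat -> 'cV[R]_n)
  (ybar : nat -> 'cV[R]_m) (taubar : nat -> R) (xp : nat -> 'cV[R]_n)
  (d : nat -> 'cV[R]_n) (y : nat -> 'cV[R]_m) :
  (m <= n)%N ->
  C1_problem f c gradf Jc ->
  0 <= kappaFO -> 0 <= eps_g ->
  0 < tau_m1 -> 0 < alpha_max <= 1 -> 0 < alpha0 <= alpha_max -> 0 <= eps_f ->
  0 < gamma < 1 -> 0 < theta < 1 -> 0 < sigma < 1 -> 0 < eps_tau < 1 ->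
  SS_SQP c Jc x0 tau_m1 alpha_max alpha0 eps_f gamma theta sigma eps_tau
    H gbar fb0 fbp x alpha dbar ybar taubar xp ->
  assumption_A1 f c gradf Jc x xp ->
  assumption_A2 Jc x H kappaH zeta ->
  (* deterministic pair (d_k, y_k) *)
  (forall k, kkt (H k) (Jc (x k)) (gradf (x k)) (c (x k)) (d k) (y k)) ->
  0 < kappa_y -> (forall k, enorm (y k) <= kappa_y) ->
  0 < kappa_l ->
  (forall k, kappa_l * taubar k * (enorm (dbar k) ^+ 2 + enorm (c (x k)))
             <= Dl c (x k) (taubar k) (gbar k) (dbar k)) ->
  forall k : nat,
    let Dlk := Dl c (x k) (taubar k) (gbar k) (dbar k) in
    (enorm (gbar k - gradf (x k)) <= kappaFO * alpha k * Num.sqrt Dlk ->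
       taubar k * `|dotv (gbar k) (dbar k)| <=
       (Num.max kappaH kappa_y / kappa_l
        + Num.sqrt (taubar k) * (1 + kappaH / zeta) * kappaFO * alpha k
          / Num.sqrt kappa_l) * Dlk)
    /\
    (enorm (gbar k - gradf (x k)) <= eps_g ->
       taubar k * `|dotv (gbar k) (dbar k)| <=
       (Num.max kappaH kappa_y + 1) / kappa_l * Dlk
       + taubar k * (1 + kappaH / zeta) ^+ 2 / 4 * eps_g ^+ 2).
Proof.
move=> _ _ _ _ tau0_gt0 _ _ _ _ _ /andP[_ /ltW sigma_le1] /andP[_ /ltW eps_le1].
move=> [[_ _ Kbar] [tau_rec _]] _ [kH_gt0 zeta_gt0 A2] Kdet _ y_le kl_gt0 Dl_lb k Dlk.
have [_ H_bounded H_curv] := A2 k.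
have tau_ge0 := tau_seq_ge0 sigma_le1 eps_le1 (ltW tau0_gt0) tau_rec k.
have G_le : `|dotv (gbar k) (dbar k)| <=
    Num.max kappaH kappa_y * (enorm (dbar k) ^+ 2 + enorm (c (x k)))
    + (1 + kappaH / zeta) * enorm (gbar k - gradf (x k)) * enorm (dbar k).
  apply: le_trans (kkt_dotv_bound (ltW kH_gt0) zeta_gt0 H_bounded H_curv
                     (Kbar k) (Kdet k) (y_le k)) _.
  by rewrite lerD2r mulrDr lerD // ler_wpM2r ?sqr_ge0 ?enorm_ge0 // le_max lexx ?orbT.
have M_ge0 : 0 <= Num.max kappaH kappa_y by rewrite le_max (ltW kH_gt0).
have a_ge0 : 0 <= 1 + kappaH / zeta by rewrite addr_ge0 ?divr_ge0 ?ltW.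
split=> E_le.
- rewrite -[_ * kappaFO * alpha k]mulrA.
  exact: (tau_dotv_le_Dl_sqrt_err tau_ge0 kl_gt0 M_ge0 a_ge0 (enorm_ge0 _)
           (enorm_ge0 _) (enorm_ge0 _) (Dl_lb k) G_le E_le).
- exact: (tau_dotv_le_Dl_abs_err tau_ge0 kl_gt0 M_ge0 a_ge0 (enorm_ge0 _)
           (enorm_ge0 _) (Dl_lb k) G_le E_le).
Qed.
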